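(* Let $A$ and $B$ be 0-1 matrices of sizes $p\times q$ and $q\times r$ with $p\ge r$, and let $\ell\in[p]$. Let $T\subseteq\{0,1\}^q$ be a set of $\ell$ centers produced by a $2$-approximation algorithm for the $\ell$-center clustering of the rows of $A$, so that $\max_{i\in[p]}\min_{u\in T}\mathrm{ham}(A_{i*},u)\le 2\lambda(A,\ell,\mathrm{row})$. For each $i\in[p]$ let $cen_\ell(A_{i*})\in T$ be a center closest to $A_{i*}$ in Hamming distance (ties broken arbitrarily), and define $D_{ij}$, for $i\in[p]$, $j\in[r]$, to be the inner product of $cen_\ell(A_{i*})$ with the $j$-th column $B_{*j}$ of $B$. Let $C=AB$ be the arithmetic product. Then for all $1\le i\le p$ and $1\le j\le r$, $|C_{ij}-D_{ij}|\le 2\lambda(A,\ell,\mathrm{row})$.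
   Context: For a positive integer $r$, $[r]=\{1,\dots,r\}$. The arithmetic matrix product $C=AB$ has entries $C_{ij}=\sum_{h=1}^q A_{ih}B_{hj}$ (over the integers); the inner product of $a,b\in\{0,1\}^q$ is $\sum_h a_hb_h$. The Hamming distance $\mathrm{ham}(a,b)$ between $a,b\in\{0,1\}^q$ is the number of coordinates in which they differ. The $\ell$-center clustering problem for the rows of $A$ asks for a set $T$ of $\ell$ points of $\{0,1\}^q$ minimizing $\max_{i\in[p]}\min_{u\in T}\mathrm{ham}(A_{i*},u)$; this minimum value is denoted $\lambda(A,\ell,\mathrm{row})$, where $A_{i*}$ is the $i$-th row of $A$. *)

From HB Require Import structures.
From mathcomp Require Import all_boot all_order all_algebra.
Set Implicit Arguments. Unset Strict Implicit. Unset Printing Implicit Defensive.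
Import Order.TTheory GRing.Theory Num.Theory.

Definition ham q (a b : 'rV[bool]_q) : nat := #|[set k | a ord0 k != b ord0 k]|.

Definition inner q (a : 'rV[bool]_q) (b : 'cV[bool]_q) : nat :=
  \sum_(k < q) (a ord0 k : nat) * (b k ord0 : nat).

Definition intmx m n (A : 'M[bool]_(m, n)) : 'M[int]_(m, n) :=
  map_mx (fun b : bool => Posz (nat_of_bool b)) A.

Definition arith_prod p q r (A : 'M[bool]_(p, q)) (B : 'M[bool]_(q, r))
  : 'M[int]_(p, r) := intmx A *m intmx B.

Definition dist_to_set q (a : 'rV[bool]_q) (T : {set 'rV[bool]_q}) : nat :=
  \big[minn/q]_(u in T) ham a u.

Definition cluster_cost p q (A : 'M[bool]_(p, q)) (T : {set 'rV[bool]_q}) : nat :=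
  \max_(i < p) dist_to_set (row i A) T.

Definition lambda_row p q (A : 'M[bool]_(p, q)) (l : nat) : nat :=
  \big[minn/q]_(T : {set 'rV[bool]_q} | 0 < #|T| <= l) cluster_cost A T.

From HB Require Import structures.
From mathcomp Require Import all_boot all_order all_algebra.
Import Order.TTheory GRing.Theory Num.Theory.

(* Changing a 0-1 vector in one coordinate changes its inner product with a
   0-1 vector by at most one, so C_ij and D_ij differ by at most the Hamming
   distance from row i of A to its center, which is at most the clustering
   cost of T, hence at most 2 lambda. *)

Lemma ham_le_dim {q} (a b : 'rV[bool]_q) : ham a b <= q.
Proof. by rewrite /ham; apply: leq_trans (max_card _) _; rewrite card_ord. Qed.

Lemma dist_inner_le_ham {q} (a c : 'rV[bool]_q) (b : 'cV[bool]_q) :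
  (`| (inner a b)%:Z - (inner c b)%:Z | <= (ham a c)%:Z)%R.
Proof.
rewrite /inner /ham -sum1dep_card -!natz !natr_sum -sumrB.
apply: le_trans (ler_norm_sum _ _ _) _.
rewrite [leRHS]big_mkcond /=; apply: ler_sum => k _.
by case: (a ord0 k); case: (c ord0 k); case: (b k ord0).
Qed.

Lemma arith_prodE {p q r} (A : 'M[bool]_(p, q)) (B : 'M[bool]_(q, r)) i j :
  (arith_prod A B i j = (inner (row i A) (col j B))%:Z)%R.
Proof.
rewrite /arith_prod /inner !mxE -natz natr_sum; apply: eq_bigr => k _.
by rewrite !mxE natz PoszM.
Qed.

Lemma nearest_ham_le_dist_to_set {q} (a c : 'rV[bool]_q) (T : {set 'rV[bool]_q}) :
  (forall u, u \in T -> ham a c <= ham a u) -> ham a c <= dist_to_set a T.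
Proof.
move=> c_nearest; apply: (big_ind (fun x => ham a c <= x)) => //.
- exact: ham_le_dim.
- by move=> x y hx hy; rewrite leq_min hx hy.
Qed.

Lemma dist_to_set_le_cluster_cost {p q} (A : 'M[bool]_(p, q)) T i :
  dist_to_set (row i A) T <= cluster_cost A T.
Proof. exact: (leq_bigmax i). Qed.

Theorem lemma1 (p q r : nat) (A : 'M[bool]_(p, q)) (B : 'M[bool]_(q, r))
  (l : nat) (T : {set 'rV[bool]_q}) (cen : 'I_p -> 'rV[bool]_q) :
  r <= p ->
  0 < l <= p ->
  0 < #|T| <= l ->
  cluster_cost A T <= 2 * lambda_row A l ->
  (forall i, cen i \in T) ->
  (forall i u, u \in T -> ham (row i A) (cen i) <= ham (row i A) u) ->
  forall (i : 'I_p) (j : 'I_r),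
    (`| arith_prod A B i j - (inner (cen i) (col j B))%:Z | <=
       (2 * lambda_row A l)%:Z)%R.
Proof.
move=> _ _ _ T_2approx _ cen_nearest i j.
rewrite arith_prodE; apply: le_trans (dist_inner_le_ham _ (cen i) _) _.
rewrite lez_nat; apply: leq_trans T_2approx.
apply: leq_trans (dist_to_set_le_cluster_cost A T i).
exact: nearest_ham_le_dist_to_set (cen_nearest i).
Qed.
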